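(* Let $T$ be an $n$-simplex, $\ell\in\{1,\dots,n-1\}$, and let non-negative integers $r_{\ell-1},r_\ell$ satisfy $r_{\ell-1}\ge 2r_\ell$. Then the sets $$D(f,r_\ell)\setminus\Big[\bigcup_{e\in\Delta_{\ell-1}(f)}D(e,r_{\ell-1})\Big],\qquad f\in\Delta_\ell(T),$$ are pairwise disjoint.
   Context: $\mathbb N$ includes $0$; $\mathbb T^n_k=\{\alpha\in\mathbb N^{n+1}:\sum_i\alpha_i=k\}$ for a fixed integer $k\ge0$. $\Delta_\ell(T)$ is the set of $\ell$-dimensional faces of $T$; a face $f$ is identified with its vertex index set $f\subseteq\{0,\dots,n\}$, $f^*=\{0,\dots,n\}\setminus f$, and $\Delta_{\ell-1}(f)$ is the set of $(\ell-1)$-dimensional faces of $f$. $D(f,r)=\{\alpha\in\mathbb T^n_k:\sum_{i\in f^*}\alpha_i\le r\}$. *)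

From mathcomp Require Import all_boot.
Set Implicit Arguments. Unset Strict Implicit. Unset Printing Implicit Defensive.

(* Multi-indices alpha in N^{n+1}, indexed by vertices 'I_n.+1 = {0,..,n}. *)
Definition mindex (n : nat) := {ffun 'I_n.+1 -> nat}.

Definition inTnk (n k : nat) (a : mindex n) : bool := \sum_(i < n.+1) a i == k.

(* Delta_l(T): l-dimensional faces of the n-simplex, identified with
   their vertex index sets, i.e. subsets of {0..n} with l+1 elements. *)
Definition faces (n l : nat) : {set {set 'I_n.+1}} :=
  [set f : {set 'I_n.+1} | #|f| == l.+1].

Definition subfaces (n l : nat) (f : {set 'I_n.+1}) : {set {set 'I_n.+1}} :=
  [set e : {set 'I_n.+1} | (e \subset f) && (#|e| == l)].

Definition D (n k : nat) (f : {set 'I_n.+1}) (r : nat) : pred (mindex n) :=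
  [pred a | inTnk k a && (\sum_(i in ~: f) a i <= r)].

Definition Dsep (n k l : nat) (rlm1 rl : nat) (f : {set 'I_n.+1}) : pred (mindex n) :=
  [pred a | (a \in D k f rl) && ~~ [exists e in subfaces l f, a \in D k e rlm1]].

From mathcomp Require Import all_boot.

Set Implicit Arguments.
Unset Strict Implicit.
Unset Printing Implicit Defensive.

(* If a lies in D(f, r) and in D(g, r) with f != g of the same size, pick a
   vertex v of f outside g.  Then e = f \ {v} is an (l-1)-face of f, and the
   mass of a outside e is a_v plus the mass outside f; the first term is part
   of the mass outside g, so the total is at most r + r <= r_{l-1}.  Hence a
   lies in D(e, r_{l-1}), i.e. it is excluded from the set attached to f. *)

Section ComplementSums.

Variables (T : finType) (F : T -> nat).

Lemma sum_setC_setD1 (f : {set T}) (v : T) : v \in f ->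
  \sum_(i in ~: (f :\ v)) F i = F v + \sum_(i in ~: f) F i.
Proof.
move=> vf; rewrite (bigD1 v) ?inE ?eqxx //=; congr (_ + _).
apply: eq_bigl => i; rewrite !inE.
by case: (eqVneq i v) => [->|_]; rewrite ?eqxx ?vf ?andbT.
Qed.

Lemma leq_sum_setC (g : {set T}) (v : T) : v \notin g ->
  F v <= \sum_(i in ~: g) F i.
Proof. by move=> vg; rewrite (bigD1 v) ?inE //= leq_addr. Qed.

End ComplementSums.

Lemma exists_notin_of_card_eq (T : finType) (f g : {set T}) :
  #|f| = #|g| -> f != g -> exists2 v, v \in f & v \notin g.
Proof.
move=> cfg nfg; apply/subsetPn; apply: contra nfg => sfg.
by rewrite eqEcard sfg cfg leqnn.
Qed.

Lemma setD1_subfaces n l (f : {set 'I_n.+1}) v :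
  #|f| = l.+1 -> v \in f -> f :\ v \in subfaces l f.
Proof.
move=> cf vf; rewrite inE subD1set /=.
by move: (cardsD1 v f); rewrite vf cf add1n => -[<-].
Qed.

Lemma D_setD1 n k r (f g : {set 'I_n.+1}) (v : 'I_n.+1) (a : mindex n) :
  v \in f -> v \notin g -> a \in D k f r -> a \in D k g r ->
  a \in D k (f :\ v) (2 * r).
Proof.
move=> vf vg; rewrite !inE => /andP [ak af] /andP [_ ag].
rewrite ak (sum_setC_setD1 a vf) mul2n -addnn leq_add //.
exact: leq_trans (leq_sum_setC a vg) ag.
Qed.

Theorem mainTheorem5 (n k l rlm1 rl : nat) :
  1 <= l <= n - 1 -> 2 * rl <= rlm1 ->
  forall f g : {set 'I_n.+1}, f \in faces n l -> g \in faces n l -> f != g ->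
  forall a : mindex n, ~ ((a \in Dsep k l rlm1 rl f) /\ (a \in Dsep k l rlm1 rl g)).
Proof.
move=> _ hr f g; rewrite !inE => /eqP cf /eqP cg nfg a [].
rewrite !inE => /andP [af /existsPn noface] /andP [ag _].
have [v vf vg] := exists_notin_of_card_eq (etrans cf (esym cg)) nfg.
have := noface (f :\ v); rewrite setD1_subfaces //= inE.
have /andP [ak sum_le] := D_setD1 vf vg af ag.
by rewrite ak (leq_trans sum_le hr).
Qed.
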